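(* Let $U\subset\mathbb P^{r,s,t}$ be a connected open set containing a null point and $F:U\to\mathbb P^{r',s',t'}$ holomorphic. Let $\mathbb C^{r',s',t'}=A\oplus B$ be a direct sum decomposition into complex linear subspaces with $\langle a,b\rangle_{r',s',t'}=0$ for all $a\in A$, $b\in B$, such that $F(U)$ is contained neither in $\mathbb PA$ nor in $\mathbb PB$. Let $\pi_A:\mathbb P^{r',s',t'}\dashrightarrow\mathbb PA$ and $\pi_B:\mathbb P^{r',s',t'}\dashrightarrow\mathbb PB$ be the rational maps induced by the linear projections of $A\oplus B$ onto $A$ and $B$. If $F$ and $\pi_A\circ F$ are local orthogonal maps, then so is $\pi_B\circ F$ (on the open set where it is defined, with $\mathbb PB$ carrying the restricted Hermitian form).
   Context: Let $r,s,t\ge 0$ be integers with $n=r+s+t>0$. $\mathbb C^{r,s,t}$ denotes $\mathbb C^n$ equipped with the (possibly degenerate, indefinite) Hermitian form $\langle z,w\rangle_{r,s,t}=\sum_{j=1}^{r}z_j\bar w_j-\sum_{j=r+1}^{r+s}z_j\bar w_j$, and $\mathbb P^{r,s,t}$ is its projectivization. A point $[z]$ is null if $\langle z,z\rangle_{r,s,t}=0$; $[z]\perp[w]$ if $\langle z,w\rangle_{r,s,t}=0$. For a complex linear subspace $H$ with the restricted form, orthogonality on $\mathbb PH$ is defined the same way. A holomorphic map $F$ from a connected open set $U$ containing a null point into such a projective space is a local orthogonal map if $F(p)\perp F(q)$ for all $p,q\in U$ with $p\perp q$. *)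

From HB Require Import structures.
From mathcomp Require Import all_boot all_order all_algebra.
From mathcomp Require Import complex.
From mathcomp Require Import all_classical all_reals all_analysis.
Set Implicit Arguments. Unset Strict Implicit. Unset Printing Implicit Defensive.
Import Order.TTheory GRing.Theory Num.Theory.
Import numFieldNormedType.Exports.
Local Open Scope ring_scope.
Local Open Scope classical_set_scope.

Section Defs.
Variable R : realType.
Local Notation C := (R[i]).

Definition hsign (r s t : nat) (j : 'I_(r + s + t)) : C :=
  if (j < r)%N then 1 else if (j < r + s)%N then -1 else 0.

Definition herm (r s t : nat) (z w : 'rV[C]_(r + s + t)) : C :=
  \sum_(j < r + s + t) hsign j * z 0 j * (w 0 j)^*.

(* An open set of P^{n-1} is represented by its (open) cone in C^n \ {0}:
   a set of nonzero vectors stable under multiplication by nonzero scalars. *)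
Definition proj_cone n (U : set 'rV[C]_n) : Prop :=
  (forall z, U z -> z != 0) /\
  (forall z (l : C), U z -> l != 0 -> U (l *: z)).

(* A map from (the projectivization of) U to P^{m-1}, represented by a
   function picking a nonzero representative F z of the image of [z];
   compatibility with the projective equivalence. *)
Definition proj_map n m (U : set 'rV[C]_n) (F : 'rV[C]_n -> 'rV[C]_m) : Prop :=
  (forall z, U z -> F z != 0) /\
  (forall z (l : C), U z -> l != 0 ->
     exists mu : C, mu != 0 /\ F (l *: z) = mu *: F z).

(* Holomorphy of such a projective map: near every point it admits a
   nonvanishing holomorphic (complex-Frechet-differentiable) lift to C^m. *)
Definition proj_holomorphic n m (U : set 'rV[C]_n) (F : 'rV[C]_n -> 'rV[C]_m)
  : Prop :=
  forall z0, U z0 ->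
    exists W : set ('rV[C]_n : normedModType C),
      [/\ open W, W z0, W `<=` U &
      exists g : ('rV[C]_n : normedModType C) -> ('rV[C]_m : normedModType C),
        (forall z, W z -> differentiable g z) /\
        (forall z, W z -> g z != 0 /\ exists mu : C, F z = mu *: g z)].

Definition orth_preserving r s t r' s' t' (U : set 'rV[C]_(r + s + t))
  (F : 'rV[C]_(r + s + t) -> 'rV[C]_(r' + s' + t')) : Prop :=
  forall p q, U p -> U q -> herm p q = 0 -> herm (F p) (F q) = 0.

Definition projA m (A B : 'M[C]_m) (v : 'rV[C]_m) : 'rV[C]_m :=
  v *m proj_mx A B.

(* Domain of definition of the rational map pi_A o F. *)
Definition dom_proj n m (U : set 'rV[C]_n) (F : 'rV[C]_n -> 'rV[C]_m)
  (A B : 'M[C]_m) : set 'rV[C]_n :=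
  [set z | U z /\ projA A B (F z) != 0].

End Defs.

(** Split both images along C^{r',s',t'} = A (+) B.  Since A _|_ B, the form
    splits as <F p, F q> = <pi_A F p, pi_A F q> + <pi_B F p, pi_B F q>.  If
    p _|_ q the left side vanishes because F is orthogonal, and the first
    term on the right vanishes too: by orthogonality of pi_A o F when both
    A-components are nonzero, and trivially otherwise.  Hence the B-term
    vanishes. *)
From HB Require Import structures.
From mathcomp Require Import all_boot all_order all_algebra.
From mathcomp Require Import complex.
From mathcomp Require Import all_classical all_reals all_analysis.
Import Order.TTheory GRing.Theory Num.Theory.
Import numFieldNormedType.Exports.
Set Implicit Arguments. Unset Strict Implicit. Unset Printing Implicit Defensive.
Local Open Scope ring_scope.
Local Open Scope classical_set_scope.

Section HermitianForm.
Variables (R : realType) (r s t : nat).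
Local Notation C := (R[i]).
Local Notation vec := 'rV[C]_(r + s + t).

Lemma conj_hsign (j : 'I_(r + s + t)) : (hsign R j)^* = hsign R j.
Proof.
rewrite /hsign; case: ifP => _; first by rewrite rmorph1.
by case: ifP => _; rewrite ?rmorphN ?rmorph1 ?rmorph0.
Qed.

Lemma hermDl (x y w : vec) : herm (x + y) w = herm x w + herm y w.
Proof.
by rewrite /herm -big_split; apply: eq_bigr => j _; rewrite mxE mulrDr mulrDl.
Qed.

Lemma hermDr (w x y : vec) : herm w (x + y) = herm w x + herm w y.
Proof.
by rewrite /herm -big_split; apply: eq_bigr => j _; rewrite mxE rmorphD mulrDr.
Qed.

Lemma hermC (x y : vec) : herm y x = (herm x y)^*.
Proof.
rewrite /herm rmorph_sum; apply: eq_bigr => j _.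
by rewrite !rmorphM /= conjCK conj_hsign mulrAC.
Qed.

Lemma herm0l (x : vec) : herm 0 x = 0.
Proof. by rewrite /herm big1 // => j _; rewrite mxE mulr0 mul0r. Qed.

Lemma herm0r (x : vec) : herm x 0 = 0.
Proof. by rewrite hermC herm0l rmorph0. Qed.

Lemma herm_add_orthogonal (a b a' b' : vec) :
  herm a b' = 0 -> herm b a' = 0 ->
  herm (a + b) (a' + b') = herm a a' + herm b b'.
Proof. by move=> ab' ba'; rewrite !hermDl !hermDr ab' ba' addr0 add0r. Qed.

End HermitianForm.

Section OrthogonalDecomposition.
Variables (R : realType) (r s t : nat).
Local Notation C := (R[i]).
Local Notation vec := 'rV[C]_(r + s + t).
Variables A B : 'M[C]_(r + s + t).
Hypotheses (dAB : mxdirect (A + B)) (fAB : row_full (A + B)%MS).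
Hypothesis orthAB : forall a b : vec, (a <= A)%MS -> (b <= B)%MS -> herm a b = 0.

Lemma add_projA (v : vec) : projA A B v + projA B A v = v.
Proof. by rewrite /projA add_proj_mx ?submx_full //; apply/mxdirect_addsP. Qed.

Lemma herm_projA_split (v w : vec) :
  herm v w = herm (projA A B v) (projA A B w) + herm (projA B A v) (projA B A w).
Proof.
rewrite -{1}(add_projA v) -{1}(add_projA w) herm_add_orthogonal //.
  exact/orthAB/proj_mx_sub/proj_mx_sub.
by rewrite hermC orthAB ?rmorph0 ?proj_mx_sub.
Qed.

End OrthogonalDecomposition.

Theorem mainTheorem4 (R : realType) (r s t r' s' t' : nat)
  (U : set ('rV[R[i]]_(r + s + t) : normedModType R[i]))
  (F : 'rV[R[i]]_(r + s + t) -> 'rV[R[i]]_(r' + s' + t'))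
  (A B : 'M[R[i]]_(r' + s' + t')) :
  (* U: connected open subset of P^{r,s,t} (as a cone) containing a null point *)
  open U -> connected U -> proj_cone U ->
  (exists z, U z /\ herm z z = 0) ->
  (* F : U -> P^{r',s',t'} holomorphic *)
  proj_map U F -> proj_holomorphic U F ->
  (* C^{r',s',t'} = A (+) B, A _|_ B *)
  mxdirect (A + B) -> row_full (A + B)%MS ->
  (forall a b : 'rV[R[i]]_(r' + s' + t'),
      (a <= A)%MS -> (b <= B)%MS -> herm a b = 0) ->
  (* F(U) is contained neither in PA nor in PB *)
  (exists z, U z /\ ~~ (F z <= A)%MS) ->
  (exists z, U z /\ ~~ (F z <= B)%MS) ->
  (* F and pi_A o F are local orthogonal maps *)
  orth_preserving U F ->
  orth_preserving (dom_proj U F A B) (fun z => projA A B (F z)) ->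
  (* then so is pi_B o F, on its domain of definition *)
  orth_preserving (dom_proj U F B A) (fun z => projA B A (F z)).
Proof.
move=> _ _ _ _ _ _ dAB fAB orthAB _ _ orthF orthFA p q [Up _] [Uq _] pq.
have := orthF p q Up Uq pq; rewrite (herm_projA_split dAB fAB orthAB).
have [-> | Ap] := eqVneq (projA A B (F p)) 0; first by rewrite herm0l add0r.
have [-> | Aq] := eqVneq (projA A B (F q)) 0; first by rewrite herm0r add0r.
by rewrite orthFA // add0r.
Qed.
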